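(* Let $\Omega\subset\mathbb{R}^2$ be a connected open set. Let $\Phi(x^1,x^2;\lambda)$ be an invertible $n\times n$ matrix function, smooth in $(x^1,x^2)$ and holomorphic in $\lambda$ near $\lambda_i$ with $\Phi(x;\lambda_i)$ invertible. Let $T(x^1,x^2;\lambda)=\sum_{j=0}^N C_j(x^1,x^2)\lambda^j$ be a matrix polynomial in $\lambda$ with smooth coefficients, such that $\lambda_i$ (a constant) is a simple zero of $\lambda\mapsto\det T(x;\lambda)$ for every $x\in\Omega$. Put $\tilde\Phi=T\Phi$ and suppose that there are matrix functions $\tilde U_k(x;\lambda)$, $k=1,2$, holomorphic in $\lambda$ in a neighbourhood of $\lambda_i$, with $\tilde\Phi_{,k}=\tilde U_k\tilde\Phi$. Then there exists a constant vector $p_i\in\mathbb{C}^n$, $p_i\neq 0$, such that $\tilde\Phi(x;\lambda_i)p_i=0$ and $\tilde\Phi_{,k}(x;\lambda_i)p_i=0$ for $k=1,2$ and all $x\in\Omega$.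
   Context: $f_{,k}$ denotes $\partial f/\partial x^k$ with $(x^1,x^2)\in\Omega$. *)

From HB Require Export structures.
From Stdlib Require Export Reals.
From Stdlib Require Import Lra ClassicalEpsilon FunctionalExtensionality PropExtensionality.
From mathcomp Require Export all_boot all_order all_algebra.
Set Implicit Arguments. Unset Strict Implicit. Unset Printing Implicit Defensive.

Record complex := mkC { Cre : R; Cim : R }.

Definition C_eqb (z w : complex) : bool :=
  if Req_EM_T (Cre z) (Cre w) then (if Req_EM_T (Cim z) (Cim w) then true else false) else false.

Lemma C_eqP : Equality.axiom C_eqb.
Proof.
move=> [a b] [c d]; rewrite /C_eqb /=.
case: Req_EM_T => [h1|h]; last by constructor; case.
case: Req_EM_T => [h2|h]; last by constructor; case.
by constructor; rewrite h1 h2.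
Qed.
HB.instance Definition _ := hasDecEq.Build complex C_eqP.

Definition C_find (P : pred complex) (n : nat) : option complex :=
  match excluded_middle_informative (exists x, P x) with
  | left h => Some (proj1_sig (constructive_indefinite_description _ h))
  | right _ => None
  end.

Lemma C_choice_correct P n x : C_find P n = Some x -> P x.
Proof.
rewrite /C_find; case: excluded_middle_informative => // h [<-].
exact: (proj2_sig (constructive_indefinite_description _ h)).
Qed.

Lemma C_choice_complete (P : pred complex) : (exists x, P x) -> exists n, C_find P n.
Proof. by move=> h; exists 0%N; rewrite /C_find; case: excluded_middle_informative. Qed.

Lemma C_choice_ext (P Q : pred complex) : P =1 Q -> C_find P =1 C_find Q.
Proof.
move=> h; have -> // : P = Q by apply: functional_extensionality.
Qed.

HB.instance Definition _ := hasChoice.Build complex C_choice_correct C_choice_complete C_choice_ext.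

Local Open Scope R_scope.
Definition C0 := mkC 0 0.
Definition C1 := mkC 1 0.
Definition Cadd z w := mkC (Cre z + Cre w) (Cim z + Cim w).
Definition Copp z := mkC (- Cre z) (- Cim z).
Definition Cmul z w := mkC (Cre z * Cre w - Cim z * Cim w) (Cre z * Cim w + Cim z * Cre w).
Definition Cinv z := let d := Cre z ^ 2 + Cim z ^ 2 in
  mkC (Cre z / d) (- Cim z / d).
Local Close Scope R_scope.

Lemma Cext a b c d : a = c -> b = d -> mkC a b = mkC c d.
Proof. by move=> -> ->. Qed.

Lemma CaddA : associative Cadd.
Proof. move=> [a b] [c d] [e f]; apply: Cext => /=; ring. Qed.
Lemma CaddC : commutative Cadd.
Proof. move=> [a b] [c d]; apply: Cext => /=; ring. Qed.
Lemma Cadd0 : left_id C0 Cadd.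
Proof. move=> [a b]; apply: Cext => /=; ring. Qed.
Lemma CaddN : left_inverse C0 Copp Cadd.
Proof. move=> [a b]; apply: Cext => /=; ring. Qed.
HB.instance Definition _ := GRing.isZmodule.Build complex CaddA CaddC Cadd0 CaddN.

Lemma CmulA : associative Cmul.
Proof. move=> [a b] [c d] [e f]; apply: Cext => /=; ring. Qed.
Lemma CmulC : commutative Cmul.
Proof. move=> [a b] [c d]; apply: Cext => /=; ring. Qed.
Lemma Cmul1 : left_id C1 Cmul.
Proof. move=> [a b]; apply: Cext => /=; ring. Qed.
Lemma CmulDl : left_distributive Cmul Cadd.
Proof. move=> [a b] [c d] [e f]; apply: Cext => /=; ring. Qed.
Lemma C1_neq0 : C1 != C0.
Proof. apply/eqP; case; exact: R1_neq_R0. Qed.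
HB.instance Definition _ := GRing.Zmodule_isComNzRing.Build complex CmulA CmulC Cmul1 CmulDl C1_neq0.

Lemma CmulV (z : complex) : z != GRing.zero -> Cmul (Cinv z) z = @GRing.one complex.
Proof.
case: z => a b /eqP nz; have hd : Rplus (pow a 2) (pow b 2) <> R0.
  move=> h; apply: nz; have ha : a = R0 by nra. have hb : b = R0 by nra.
  by rewrite ha hb.
rewrite /Cmul /Cinv /=; apply: Cext => /=; field; move: hd; rewrite /= !Rmult_1_r; exact.
Qed.
Lemma Cinv0 : Cinv GRing.zero = GRing.zero.
Proof. apply: Cext => /=; rewrite /Rdiv; ring. Qed.
HB.instance Definition _ := GRing.ComNzRing_isField.Build complex CmulV Cinv0.


Definition Pt := (R * R)%type.

Inductive xdir := X1 | X2.

Local Open Scope R_scope.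

Definition Cnorm (z : complex) : R := sqrt (Cre z ^ 2 + Cim z ^ 2).

Definition ball2 (x : Pt) (r : R) (y : Pt) : Prop :=
  sqrt ((fst y - fst x) ^ 2 + (snd y - snd x) ^ 2) < r.

Definition open_set (Om : Pt -> Prop) : Prop :=
  forall x, Om x -> exists r, 0 < r /\ forall y, ball2 x r y -> Om y.

(* connected (and, as usual for a domain, nonempty) *)
Definition connected (Om : Pt -> Prop) : Prop :=
  (exists x, Om x) /\
  forall U V : Pt -> Prop, open_set U -> open_set V ->
    (forall x, Om x -> U x \/ V x) ->
    (forall x, Om x -> U x -> V x -> False) ->
    (forall x, Om x -> U x) \/ (forall x, Om x -> V x).

Definition xcomp (k : xdir) (x : Pt) : R :=
  match k with X1 => fst x | X2 => snd x end.

Definition shift (k : xdir) (x : Pt) (t : R) : Pt :=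
  match k with X1 => (t, snd x) | X2 => (fst x, t) end.

Definition is_pderivC (k : xdir) (f : Pt -> complex) (x : Pt) (d : complex) : Prop :=
  derivable_pt_lim (fun t => Cre (f (shift k x t))) (xcomp k x) (Cre d) /\
  derivable_pt_lim (fun t => Cim (f (shift k x t))) (xcomp k x) (Cim d).

(* the partial derivative f_{,k}(x) (arbitrary value 0 when it does not exist) *)
Definition pderivC (k : xdir) (f : Pt -> complex) (x : Pt) : complex :=
  match excluded_middle_informative (exists d, is_pderivC k f x d) with
  | left h => proj1_sig (constructive_indefinite_description _ h)
  | right _ => C0
  end.

Fixpoint iter_pderivC (s : seq xdir) (f : Pt -> complex) : Pt -> complex :=
  match s with
  | [::] => f
  | k :: s' => pderivC k (iter_pderivC s' f)
  end.

Definition continuous_atC (f : Pt -> complex) (x : Pt) : Prop :=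
  forall eps, 0 < eps -> exists delta, 0 < delta /\
    forall y, ball2 x delta y -> Cnorm (Cadd (f y) (Copp (f x))) < eps.

Definition smooth_on (Om : Pt -> Prop) (f : Pt -> complex) : Prop :=
  forall (s : seq xdir) (x : Pt), Om x ->
    continuous_atC (iter_pderivC s f) x /\
    forall k, exists d, is_pderivC k (iter_pderivC s f) x d.

Local Close Scope R_scope.
Local Open Scope ring_scope.

Definition has_cderiv (g : complex -> complex) (z l : complex) : Prop :=
  forall eps : R, Rlt 0 eps -> exists delta : R, Rlt 0 delta /\
    forall h : complex, h != 0 -> Rlt (Cnorm h) delta ->
      Rlt (Cnorm ((g (z + h) - g z) / h - l)) eps.

Definition holo_at (g : complex -> complex) (z : complex) : Prop := exists l, has_cderiv g z l.

Definition simple_zero (g : complex -> complex) (z : complex) : Prop :=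
  g z = 0 /\ exists l, l != 0 /\ has_cderiv g z l.

Definition smooth_mx n (Om : Pt -> Prop) (F : Pt -> 'M[complex]_n) : Prop :=
  forall i j, smooth_on Om (fun x => F x i j).

Definition holo_mx n (G : complex -> 'M[complex]_n) (z : complex) : Prop :=
  forall i j, holo_at (fun l => G l i j) z.

Definition is_pderiv_mx n (k : xdir) (F : Pt -> 'M[complex]_n) (x : Pt) (D : 'M[complex]_n) : Prop :=
  forall i j, is_pderivC k (fun y => F y i j) x (D i j).

Definition pderiv_mx n (k : xdir) (F : Pt -> 'M[complex]_n) (x : Pt) : 'M[complex]_n :=
  \matrix_(i, j) pderivC k (fun y => F y i j) x.

Definition Tev n (Cf : nat -> Pt -> 'M[complex]_n) (N : nat) (x : Pt) (lam : complex) : 'M[complex]_n :=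
  \sum_(j < N.+1) lam ^+ j *: Cf j x.

Definition tPhi n (Cf : nat -> Pt -> 'M[complex]_n) (N : nat) (Phi : Pt -> complex -> 'M[complex]_n)
  (x : Pt) (lam : complex) : 'M[complex]_n :=
  Tev Cf N x lam *m Phi x lam.

From Stdlib Require Import Lra Psatz Classical ClassicalEpsilon FunctionalExtensionality.
Set Implicit Arguments. Unset Strict Implicit.
Import GRing.Theory.

(* Write B(x) = T(x; lam_i), P(x) = Phi(x; lam_i) and A(x) = B(x) P(x).
   1. Since lam_i is a simple zero of det T(x; .), Jacobi's formula shows that
      adj B(x) <> 0; hence ker B(x), and ker A(x) = P(x)^-1 ker B(x), are
      lines, spanned by the nonzero columns of adj P(x) adj B(x), whose entries
      are polynomials in the differentiable entries of P and B.
   2. Along a coordinate line, differentiating A w = 0 for such a column w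
      and using A_{,k} = U_k A (which kills ker A) gives A w' = 0, so w' is
      parallel to w and the direction of w is locally constant.
   3. A locally constant property is constant on intervals (intermediate
      value theorem), so the kernel is constant on coordinate segments, hence
      on small balls, hence, Omega being connected, on all of Omega. *)

Section Modulus.
Local Open Scope R_scope.

Lemma Cnorm_ge0 z : 0 <= Cnorm z.
Proof. exact: sqrt_pos. Qed.

Lemma Cnorm_gt0 z : z <> C0 -> 0 < Cnorm z.
Proof.
case: z => a b nz; apply: sqrt_lt_R0.
have [//|e] := Rle_lt_or_eq_dec 0 (a ^ 2 + b ^ 2) ltac:(nra).
have [ha hb] : a = 0 /\ b = 0 by apply: Rplus_sqr_eq_0; rewrite /Rsqr e /=; ring.
by case: nz; rewrite ha hb.
Qed.

Lemma Cnorm_mul z w : Cnorm (Cmul z w) = Cnorm z * Cnorm w.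
Proof.
rewrite /Cnorm -sqrt_mult; try (apply: Rplus_le_le_0_compat; apply: pow2_ge_0).
by f_equal; case: z => a b; case: w => c d /=; ring.
Qed.

(* The triangle inequality, via Cauchy-Schwarz for a c + b d. *)
Lemma Cnorm_add z w : Cnorm (Cadd z w) <= Cnorm z + Cnorm w.
Proof.
rewrite /Cnorm; case: z => a b; case: w => c d /=.
have e1 := sqrt_sqrt (a ^ 2 + b ^ 2) ltac:(nra).
have e2 := sqrt_sqrt (c ^ 2 + d ^ 2) ltac:(nra).
have hp : 0 <= sqrt (a ^ 2 + b ^ 2) * sqrt (c ^ 2 + d ^ 2) by apply: Rmult_le_pos; apply: sqrt_pos.
have cauchy_schwarz : a * c + b * d <= sqrt (a ^ 2 + b ^ 2) * sqrt (c ^ 2 + d ^ 2).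
  case: (Rle_lt_dec (a * c + b * d) 0) => h; first lra.
  apply: Rsqr_incr_0_var hp.
  rewrite Rsqr_mult !Rsqr_sqrt; try (apply: Rplus_le_le_0_compat; apply: pow2_ge_0).
  have := Rle_0_sqr (a * d - b * c); rewrite /Rsqr /=; nra.
apply: Rsqr_incr_0_var; last by apply: Rplus_le_le_0_compat; apply: sqrt_pos.
rewrite Rsqr_sqrt; last by apply: Rplus_le_le_0_compat; apply: pow2_ge_0.
move: e1 e2 cauchy_schwarz; rewrite /Rsqr /= !Rmult_1_r; nra.
Qed.

Lemma Cnorm_opp z : Cnorm (Copp z) = Cnorm z.
Proof. by rewrite /Cnorm; case: z => a b /=; f_equal; ring. Qed.

Lemma Cnorm_C0 : Cnorm C0 = 0.
Proof. by rewrite /Cnorm /= !Rmult_0_l Rplus_0_l sqrt_0. Qed.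

Lemma Cnorm_real t : Cnorm (mkC t 0) = Rabs t.
Proof. by rewrite /Cnorm /= -sqrt_Rsqr_abs /Rsqr; f_equal; ring. Qed.

End Modulus.

Section RealDerivatives.
Local Open Scope R_scope.

Lemma derivable_pt_lim_val f x l l' : derivable_pt_lim f x l -> l = l' -> derivable_pt_lim f x l'.
Proof. by move=> h <-. Qed.

Lemma derivable_pt_lim_local (f g : R -> R) x l d : 0 < d ->
  (forall y, Rabs (y - x) < d -> f y = g y) ->
  derivable_pt_lim f x l -> derivable_pt_lim g x l.
Proof.
move=> dpos hfg h eps he; case: (h eps he) => del hdel.
have hmin : 0 < Rmin del d by apply: Rmin_pos => //; exact: cond_pos del.
exists (mkposreal _ hmin) => hh hh0 hhl.
rewrite -!hfg; first (apply: hdel => //; apply: Rlt_le_trans hhl _; apply: Rmin_l).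
- by rewrite Rminus_diag Rabs_R0.
- by replace (x + hh - x) with hh by ring; apply: Rlt_le_trans hhl _; apply: Rmin_r.
Qed.

Lemma zero_derivative_const (g : R -> R) c e :
  (forall x, c < x < e -> derivable_pt_lim g x 0) ->
  forall s t, c < s < e -> c < t < e -> g s = g t.
Proof.
move=> h.
have ordered : forall s t, c < s < e -> c < t < e -> s < t -> g s = g t.
  move=> s t hs ht st.
  have pr : forall x, s < x < t -> derivable_pt g x by move=> x hx; exists 0; apply: h; lra.
  have cst : constant_D_eq g (fun x => s <= x <= t) (g s).
    apply: (@null_derivative_loc g s t pr).
    - by move=> x hx; apply: derivable_continuous_pt; exists 0; apply: h; lra.
    - move=> x P; rewrite /derive_pt; case: (pr x P) => l hl /=.
      by apply: (uniqueness_limite g x) hl _; apply: h; lra.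
  by symmetry; apply: cst; lra.
move=> s t hs ht; case: (Rtotal_order s t) => [st|[->|ts]] //; first exact: ordered.
by symmetry; exact: ordered.
Qed.

Lemma derivable_pt_lim_nonzero_near g x l : derivable_pt_lim g x l -> g x <> 0 ->
  exists d, 0 < d /\ forall y, Rabs (y - x) < d -> g y <> 0.
Proof.
move=> h nz.
have hc : continuity_pt g x by apply: derivable_continuous_pt; exists l.
have ha : 0 < Rabs (g x) by apply: Rabs_pos_lt.
case: (hc _ ha) => alp [alpp H]; exists alp; split => // y hy.
case: (Req_dec y x) => [->//|nyx] hy0.
have := H y (conj (conj I (not_eq_sym nyx)) hy); rewrite /dist /= /R_dist hy0.
by rewrite Rminus_0_l Rabs_Ropp; lra.
Qed.

End RealDerivatives.

Local Open Scope ring_scope.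

Definition is_derivR (g : R -> complex) (t : R) (d : complex) : Prop :=
  derivable_pt_lim (fun s => Cre (g s)) t (Cre d) /\
  derivable_pt_lim (fun s => Cim (g s)) t (Cim d).

Definition derivableR (g : R -> complex) (t : R) : Prop := exists d, is_derivR g t d.

Lemma is_derivR_unique f t a b : is_derivR f t a -> is_derivR f t b -> a = b.
Proof.
case: a b => a1 a2 [b1 b2] [/= h1 h2] [/= h3 h4].
by rewrite (uniqueness_limite _ _ _ _ h1 h3) (uniqueness_limite _ _ _ _ h2 h4).
Qed.

Lemma is_derivR_local f g t a (d : R) : Rlt 0 d ->
  (forall s, Rlt (Rabs (Rminus s t)) d -> f s = g s) -> is_derivR f t a -> is_derivR g t a.
Proof.
move=> dp hfg [h1 h2]; split.
- by apply: (derivable_pt_lim_local dp _ h1) => y hy; rewrite hfg.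
- by apply: (derivable_pt_lim_local dp _ h2) => y hy; rewrite hfg.
Qed.

Lemma is_derivR_const (c : complex) t : is_derivR (fun _ => c) t 0.
Proof. by split; exact: derivable_pt_lim_const. Qed.

Lemma is_derivR_add f g t a b : is_derivR f t a -> is_derivR g t b ->
  is_derivR (fun s => f s + g s) t (a + b).
Proof. by case=> h1 h2 [h3 h4]; split; apply: derivable_pt_lim_plus. Qed.

Lemma is_derivR_mul f g t a b : is_derivR f t a -> is_derivR g t b ->
  is_derivR (fun s => f s * g s) t (a * g t + f t * b).
Proof.
case=> h1 h2 [h3 h4]; split.
- apply: derivable_pt_lim_val (derivable_pt_lim_minus _ _ _ _ _
    (derivable_pt_lim_mult _ _ _ _ _ h1 h3) (derivable_pt_lim_mult _ _ _ _ _ h2 h4)) _.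
  by rewrite /=; ring.
- apply: derivable_pt_lim_val (derivable_pt_lim_plus _ _ _ _ _
    (derivable_pt_lim_mult _ _ _ _ _ h1 h4) (derivable_pt_lim_mult _ _ _ _ _ h2 h3)) _.
  by rewrite /=; ring.
Qed.

(* (1/f)' = - f' / f^2, computed on real and imaginary parts
   1/(u + iv) = (u - iv)/(u^2 + v^2). *)
Lemma is_derivR_inv f t a : f t != 0 -> is_derivR f t a ->
  is_derivR (fun s => (f s)^-1) t (- (a * (f t)^-1 * (f t)^-1)).
Proof.
move=> nz [h1 h2].
set u := fun s => Cre (f s); set v := fun s => Cim (f s).
have hD0 : Rplus (u t ^ 2) (v t ^ 2) <> R0.
  move=> h; apply: (negP nz); apply/eqP; rewrite /u /v in h.
  case: (f t) h => p q /= h.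
  by case: (Rplus_sqr_eq_0 p q) => [|-> ->] //; rewrite /Rsqr; nra.
have hD : derivable_pt_lim (fun s => Rplus (u s ^ 2) (v s ^ 2)) t
    (Rplus (Rmult (Rmult 2 (u t)) (Cre a)) (Rmult (Rmult 2 (v t)) (Cim a))).
  apply: derivable_pt_lim_val (derivable_pt_lim_plus _ _ _ _ _
     (derivable_pt_lim_mult _ _ _ _ _ h1 (derivable_pt_lim_mult _ _ _ _ _ h1 (derivable_pt_lim_const 1 t)))
     (derivable_pt_lim_mult _ _ _ _ _ h2 (derivable_pt_lim_mult _ _ _ _ _ h2 (derivable_pt_lim_const 1 t)))) _.
  by rewrite /fct_cte /mult_fct /u /v /=; ring.
move: hD0 hD; rewrite /u /v => hD0 hD; split.
- apply: derivable_pt_lim_val (derivable_pt_lim_div _ _ _ _ _ h1 hD hD0) _.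
  by move: hD0; case: (f t) => p q /= hD0; rewrite /Rsqr; field; move: hD0; rewrite !Rmult_1_r.
- apply: derivable_pt_lim_val (derivable_pt_lim_div _ _ _ _ _ (derivable_pt_lim_opp _ _ _ h2) hD hD0) _.
  by move: hD0; rewrite /opp_fct; case: (f t) => p q /= hD0; rewrite /Rsqr; field; move: hD0; rewrite !Rmult_1_r.
Qed.

Lemma is_derivR_ext f g t a : is_derivR f t a -> f =1 g -> is_derivR g t a.
Proof. by move=> h /functional_extensionality <-. Qed.

Lemma is_derivR_sum (I : Type) (r : seq I) (P : pred I) (F : I -> R -> complex) (d : I -> complex) t :
  (forall i, P i -> is_derivR (F i) t (d i)) ->
  is_derivR (fun s => \sum_(i <- r | P i) F i s) t (\sum_(i <- r | P i) d i).
Proof.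
move=> h; elim: r => [|x r IH].
  by rewrite big_nil; apply: is_derivR_ext (is_derivR_const 0 t) _ => s; rewrite big_nil.
rewrite big_cons; case: ifP => Px.
  by apply: is_derivR_ext (is_derivR_add (h x Px) IH) _ => s; rewrite big_cons Px.
by apply: is_derivR_ext IH _ => s; rewrite big_cons Px.
Qed.

Lemma derivableR_nonzero_near f t : derivableR f t -> f t != 0 ->
  exists d, Rlt 0 d /\ forall s, Rlt (Rabs (Rminus s t)) d -> f s != 0.
Proof.
case=> l [h1 h2] nz.
have [hn|hn] : Cre (f t) <> R0 \/ Cim (f t) <> R0.
  case: (Req_dec (Cre (f t)) R0) => a; last by left.
  case: (Req_dec (Cim (f t)) R0) => b; last by right.
  by case/eqP: nz; move: a b; case: (f t) => p q /= -> ->.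
- case: (derivable_pt_lim_nonzero_near h1 hn) => d [dp hd]; exists d; split => // s hs.
  by apply/eqP => e; apply: (hd s hs); rewrite e.
- case: (derivable_pt_lim_nonzero_near h2 hn) => d [dp hd]; exists d; split => // s hs.
  by apply/eqP => e; apply: (hd s hs); rewrite e.
Qed.

Definition derivR_of (f : R -> complex) (t : R) : complex :=
  match excluded_middle_informative (derivableR f t) with
  | left h => proj1_sig (constructive_indefinite_description _ h)
  | right _ => 0
  end.

Lemma derivR_ofP f t : derivableR f t -> is_derivR f t (derivR_of f t).
Proof.
rewrite /derivR_of; case: excluded_middle_informative => // h _.
exact: (proj2_sig (constructive_indefinite_description _ h)).
Qed.

Lemma ratio_const (wi wm al : R -> complex) c e :
  (forall t, Rlt c t -> Rlt t e ->
     [/\ wi t != 0, is_derivR wi t (al t * wi t) & is_derivR wm t (al t * wm t)]) ->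
  forall s t, Rlt c s -> Rlt s e -> Rlt c t -> Rlt t e ->
  wm s / wi s = wm t / wi t.
Proof.
move=> h.
have hd : forall t, Rlt c t -> Rlt t e -> is_derivR (fun s => wm s / wi s) t 0.
  move=> t ct te; case: (h t ct te) => nz hi hm.
  have := is_derivR_mul hm (is_derivR_inv nz hi).
  by rewrite (mulfK nz) mulrN mulrA [al t * _]mulrC subrr.
move=> s t cs se ct te.
have re : Cre (wm s / wi s) = Cre (wm t / wi t).
  apply: (zero_derivative_const (g := fun s => Cre (wm s / wi s)) (c := c) (e := e)); try by split.
  by move=> x [cx xe]; case: (hd x cx xe).
have im : Cim (wm s / wi s) = Cim (wm t / wi t).
  apply: (zero_derivative_const (g := fun s => Cim (wm s / wi s)) (c := c) (e := e)); try by split.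
  by move=> x [cx xe]; case: (hd x cx xe).
by move: re im; case: (wm s / wi s) => a b; case: (wm t / wi t) => a' b' /= -> ->.
Qed.

Section PolynomialClosure.
Variable X : Type.
Variable Pr : (X -> complex) -> Prop.
Hypothesis Pr_const : forall c, Pr (fun _ => c).
Hypothesis Pr_add : forall f g, Pr f -> Pr g -> Pr (fun s => f s + g s).
Hypothesis Pr_mul : forall f g, Pr f -> Pr g -> Pr (fun s => f s * g s).

Lemma Pr_ext f g : Pr f -> f =1 g -> Pr g.
Proof. by move=> h /functional_extensionality <-. Qed.

Lemma Pr_big {op : complex -> complex -> complex} {idx : complex} {I : Type} {r : seq I}
    {P : pred I} {F : I -> X -> complex} :
  (forall f g, Pr f -> Pr g -> Pr (fun s => op (f s) (g s))) ->
  (forall i, P i -> Pr (F i)) -> Pr (fun s => \big[op/idx]_(i <- r | P i) F i s).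
Proof.
move=> Pr_op h; elim: r => [|x r IH].
  by apply: Pr_ext (Pr_const idx) _ => s; rewrite big_nil.
case Px: (P x).
  by apply: Pr_ext (Pr_op _ _ (h x Px) IH) _ => s; rewrite big_cons Px.
by apply: Pr_ext IH _ => s; rewrite big_cons Px.
Qed.

Lemma Pr_det n (M : X -> 'M[complex]_n) :
  (forall i j, Pr (fun s => M s i j)) -> Pr (fun s => \det (M s)).
Proof.
move=> h; apply: Pr_big Pr_add _ => sg _; apply: Pr_mul (Pr_const _) _.
by apply: Pr_big Pr_mul _ => i _; apply: h.
Qed.

Lemma Pr_adj n (M : X -> 'M[complex]_n) :
  (forall i j, Pr (fun s => M s i j)) -> forall i j, Pr (fun s => \adj (M s) i j).
Proof.
move=> h i j.
have minor : Pr (fun s => \det (row' j (col' i (M s)))).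
  by apply: Pr_det => a b; apply: Pr_ext (h (lift j a) (lift i b)) _ => s; rewrite !mxE.
by apply: Pr_ext (Pr_mul (Pr_const ((-1) ^+ (j + i))) minor) _ => s; rewrite mxE.
Qed.

Lemma Pr_mulmx m n p (A : X -> 'M[complex]_(m, n)) (B : X -> 'M[complex]_(n, p)) :
  (forall i j, Pr (fun s => A s i j)) -> (forall i j, Pr (fun s => B s i j)) ->
  forall i j, Pr (fun s => (A s *m B s) i j).
Proof.
move=> hA hB i j; apply: (Pr_ext (f := fun s => \sum_k A s i k * B s k j)).
  by apply: Pr_big Pr_add _ => k _; exact: Pr_mul.
by move=> s; rewrite mxE.
Qed.

End PolynomialClosure.

Section KernelLine.
Variable F : fieldType.

Definition ker_le1 n (M : 'M[F]_n) : Prop := forall v w : 'cV[F]_n,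
  M *m v = 0 -> M *m w = 0 -> w != 0 -> exists a, v = a *: w.

Lemma ker_le1_span n (M : 'M[F]_n) (w p : 'cV[F]_n) : ker_le1 M -> M *m w = 0 -> w != 0 ->
  (M *m p = 0 <-> exists a, p = a *: w).
Proof.
move=> hK hw nz; split; first by move=> hp; exact: hK.
by case=> a ->; rewrite -scalemxAr hw scaler0.
Qed.

Lemma ker_le1_same_line n (M M' : 'M[F]_n) (w w' : 'cV[F]_n) (a : F) :
  ker_le1 M -> ker_le1 M' -> M *m w = 0 -> M' *m w' = 0 -> w' != 0 ->
  w = a *: w' -> a != 0 -> forall p : 'cV[F]_n, M *m p = 0 <-> M' *m p = 0.
Proof.
move=> hK hK' hw hw' nz' ew anz p.
have nz : w != 0 by rewrite ew scaler_eq0 negb_or anz.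
rewrite (ker_le1_span p hK hw nz) (ker_le1_span p hK' hw' nz'); split; case=> b ->.
  by exists (b * a); rewrite ew scalerA.
by exists (b / a); rewrite ew scalerA divfK.
Qed.

Lemma nonzero_entry m n (M : 'M[F]_(m, n)) : M != 0 -> exists i j, M i j != 0.
Proof.
move=> nz; apply: NNPP => hn; case/eqP: nz; apply/matrixP => i j.
by rewrite mxE; apply/eqP; apply: NNPP => h; apply: hn; exists i, j; exact/negP.
Qed.

Lemma nonzero_col m n (M : 'M[F]_(m, n)) : M != 0 -> exists j, col j M != 0.
Proof.
case/nonzero_entry => i [j hij]; exists j; apply: contra hij => /eqP hc.
by have := congr1 (fun N : 'cV_m => N i 0) hc; rewrite !mxE => ->.
Qed.

(* If some cofactor B_{ji} is nonzero, a kernel vector of B is determined by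
   its i-th entry: the remaining entries solve an invertible system. *)
Lemma ker_le1_of_adj n (B : 'M[F]_n) : \adj B != 0 -> ker_le1 B.
Proof.
case: n B => [|n] B; first by rewrite [\adj B]flatmx0 eqxx.
case/nonzero_entry => i [j hij].
have minor_unit : row' j (col' i B) \in unitmx.
  rewrite unitmxE unitfE; move: hij; rewrite mxE /cofactor.
  by apply: contraNneq => ->; rewrite mulr0.
have determined : forall u : 'cV[F]_n.+1, B *m u = 0 -> u i 0 = 0 -> u = 0.
  move=> u hu hui.
  have hminor : row' j (col' i B) *m row' i u = 0.
    apply/matrixP => r z; rewrite (ord1 z) !mxE.
    have := congr1 (fun M : 'cV[F]_n.+1 => M (lift j r) 0) hu.
    rewrite !mxE (bigD1_ord i) //= hui mulr0 add0r => h; apply: etrans h.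
    by apply: eq_bigr => k _; rewrite !mxE.
  have hrow : row' i u = 0 by rewrite -(mulKmx minor_unit (row' i u)) hminor mulmx0.
  apply/matrixP => m z; rewrite (ord1 z) [RHS]mxE.
  case: (unliftP i m) => [k ->|->] //.
  by have := congr1 (fun M : 'cV[F]_n => M k 0) hrow; rewrite !mxE.
move=> v w hv hw nzw.
have wi : w i 0 != 0 by apply: contra nzw => /eqP h0; apply/eqP; exact: determined.
exists (v i 0 / w i 0); apply/eqP; rewrite -subr_eq0; apply/eqP; apply: determined.
  by rewrite mulmxBr -scalemxAr hv hw scaler0 subr0.
by rewrite !mxE divfK // subrr.
Qed.

Lemma ker_le1_mulmx_unit n (B P : 'M[F]_n) : ker_le1 B -> P \in unitmx -> ker_le1 (B *m P).
Proof.
move=> hK hP v w; rewrite -!mulmxA => hv hw nzw.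
have nzPw : P *m w != 0.
  by apply: contra nzw => /eqP h; apply/eqP; rewrite -(mulKmx hP w) h mulmx0.
case: (hK _ _ hv hw nzPw) => a ha; exists a.
by rewrite -(mulKmx hP v) ha -scalemxAr mulKmx.
Qed.

Lemma mulmx_unit_neq0 m n (P : 'M[F]_m) (M : 'M[F]_(m, n)) :
  P \in unitmx -> M != 0 -> P *m M != 0.
Proof. by move=> hP; apply: contra => /eqP h; rewrite -(mulKmx hP M) h mulmx0. Qed.

Lemma adj_unitmx n (P : 'M[F]_n) : P \in unitmx -> \adj P \in unitmx.
Proof.
move=> hP; have hd : \det P != 0 by move: hP; rewrite unitmxE unitfE.
have : \adj P *m ((\det P)^-1 *: P) = 1%:M.
  by rewrite -scalemxAr mul_adj_mx scale_scalar_mx mulVf.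
by case/mulmx1_unit.
Qed.

Lemma singular_adj_ker n (B P : 'M[F]_n) (j : 'I_n) : \det B = 0 ->
  (B *m P) *m col j (\adj P *m \adj B) = 0.
Proof.
move=> hB; rewrite colE !mulmxA -(mulmxA B P) mul_mx_adj mul_mx_scalar -scalemxAl.
by rewrite mul_mx_adj hB -scalemxAl mul_scalar_mx scale0r scaler0.
Qed.

End KernelLine.

Lemma Cnorm_sub (a b : complex) : Rle (Cnorm (a - b)) (Rplus (Cnorm a) (Cnorm b)).
Proof. by have := Cnorm_add a (Copp b); rewrite Cnorm_opp. Qed.

Lemma Cnorm_sum (I : Type) (s : seq I) (F : I -> complex) :
  Rle (Cnorm (\sum_(i <- s) F i)) (\big[Rplus/R0]_(i <- s) Cnorm (F i)).
Proof.
elim: s => [|x s IH]; first by rewrite !big_nil Cnorm_C0; apply: Rle_refl.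
by rewrite !big_cons; apply: Rle_trans (Cnorm_add _ _) _; apply: Rplus_le_compat_l.
Qed.

Lemma Cnorm_exp_le1 (h : complex) k : Rle (Cnorm h) 1 -> Rle (Cnorm (h ^+ k)) 1.
Proof.
move=> h1; elim: k => [|k IH].
  by rewrite expr0 /Cnorm /= Rmult_0_l Rplus_0_r !Rmult_1_r sqrt_1; apply: Rle_refl.
rewrite exprS; have -> : h * h ^+ k = Cmul h (h ^+ k) by [].
by rewrite Cnorm_mul; have := Cnorm_ge0 h; have := Cnorm_ge0 (h ^+ k); nra.
Qed.

Lemma poly_bounded (r : {poly complex}) : exists K, Rle 0 K /\
  forall h, Rle (Cnorm h) 1 -> Rle (Cnorm r.[h]) K.
Proof.
exists (\big[Rplus/R0]_(i <- index_enum 'I_(size r)) Cnorm r`_i); split.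
  elim: (index_enum _) => [|x s IH]; rewrite ?big_nil ?big_cons; first exact: Rle_refl.
  by have := Cnorm_ge0 r`_x; lra.
move=> h h1; rewrite horner_coef; apply: Rle_trans (Cnorm_sum _ _) _.
elim: (index_enum _) => [|x s IH]; rewrite ?big_nil ?big_cons; first exact: Rle_refl.
apply: Rplus_le_compat => //; have -> : r`_x * h ^+ x = Cmul r`_x (h ^+ x) by [].
rewrite Cnorm_mul; have := Cnorm_exp_le1 x h1; have := Cnorm_ge0 r`_x.
by have := Cnorm_ge0 (h ^+ x); nra.
Qed.

(* If F is bounded near 0, then F(h) h tends to 0, so it can only tend to l = 0. *)
Lemma bounded_mul_vanishing_limit (l : complex) (F : complex -> complex) K : Rle 0 K ->
  (forall h, Rle (Cnorm h) 1 -> Rle (Cnorm (F h)) K) ->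
  (forall eps, Rlt 0 eps -> exists delta, Rlt 0 delta /\ forall h, h != 0 ->
      Rlt (Cnorm h) delta -> Rlt (Cnorm (F h * h - l)) eps) -> l = 0.
Proof.
move=> K0 hK hlim; apply/eqP; apply: contraT => lnz.
have lp : Rlt 0 (Cnorm l) by apply: Cnorm_gt0 => e; case/eqP: lnz.
case: (hlim (Rdiv (Cnorm l) 2) ltac:(lra)) => d [dp hd].
set s := Rmin (Rdiv d 2) (Rmin (Rdiv 1 2) (Rdiv (Cnorm l) (Rmult 2 (Rplus K 1)))).
have s1 : Rle s (Rdiv d 2) by apply: Rmin_l.
have s2 : Rle s (Rdiv 1 2) by apply: Rle_trans (Rmin_r _ _) (Rmin_l _ _).
have s3 : Rle s (Rdiv (Cnorm l) (Rmult 2 (Rplus K 1))).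
  by apply: Rle_trans (Rmin_r _ _) (Rmin_r _ _).
have sp : Rlt 0 s.
  by apply: Rmin_pos; first lra; apply: Rmin_pos; first lra; apply: Rdiv_lt_0_compat => //; lra.
set h := mkC s R0.
have hn : Cnorm h = s by rewrite /h Cnorm_real Rabs_pos_eq //; lra.
have hnz : h != 0 by apply/negP => /eqP e; have := congr1 Cre e; rewrite /h /=; lra.
have close := hd h hnz ltac:(rewrite hn; lra).
have small : Rle (Cnorm (F h * h)) (Rmult K s).
  have -> : F h * h = Cmul (F h) h by [].
  by rewrite Cnorm_mul hn; apply: Rmult_le_compat_r (hK h ltac:(rewrite hn; lra)); lra.
have Ks : Rlt (Rmult K s) (Rdiv (Cnorm l) 2).
  apply: Rle_lt_trans (Rmult_le_compat_l _ _ _ K0 s3) _.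
  apply: (Rmult_lt_reg_r (Rmult 2 (Rplus K 1))); first lra.
  by field_simplify; lra.
have := Cnorm_sub (F h * h) (F h * h - l).
by rewrite opprB addrC subrK; lra.
Qed.

Lemma cderiv_poly0 (p : {poly complex}) l : has_cderiv (horner p) 0 l -> l = p^`().[0].
Proof.
move=> hl.
have [q hq] : exists q, p = q * 'X + (p.[0])%:P.
  have /factor_theorem [q hq] : root (p - (p.[0])%:P) 0 by rewrite /root hornerD hornerN hornerC subrr.
  by rewrite polyC0 subr0 in hq; exists q; rewrite -hq subrK.
have [r hr] : exists r, q = r * 'X + (q.[0])%:P.
  have /factor_theorem [r hr] : root (q - (q.[0])%:P) 0 by rewrite /root hornerD hornerN hornerC subrr.
  by rewrite polyC0 subr0 in hr; exists r; rewrite -hr subrK.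
have -> : p^`().[0] = q.[0].
  by rewrite hq derivD derivM derivX derivC addr0 hornerD !hornerM hornerX mulr0 add0r hornerC mulr1.
apply/eqP; rewrite -subr_eq0; apply/eqP.
case: (poly_bounded r) => K [K0 hK].
apply: (bounded_mul_vanishing_limit (F := horner r) K0 hK) => eps ep.
case: (hl eps ep) => d [dp hd]; exists d; split => // h hnz hh.
have := hd h hnz hh; congr (Rlt (Cnorm _) _).
rewrite add0r {1}hq hornerD hornerM hornerX hornerC addrK (mulfK hnz).
by rewrite {1}hr hornerD hornerM hornerX hornerC opprB addrA.
Qed.

Section Jacobi.
Variable F : fieldType.

Lemma deriv_mulmx n (A B : 'M[{poly F}]_n) :
  map_mx deriv (A *m B) = map_mx deriv A *m B + A *m map_mx deriv B.
Proof.
apply/matrixP => a b; rewrite !mxE linear_sum -big_split /=.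
by apply: eq_bigr => k _; rewrite derivM !mxE.
Qed.

(* Differentiating M adj M = det M at a point where M is singular and
   adj M vanishes shows that det M has a critical point there. *)
Lemma deriv_det_singular n (M : 'M[{poly F}]_n) z :
  \det (map_mx (horner_eval z) M) = 0 -> \adj (map_mx (horner_eval z) M) = 0 ->
  (\det M)^`().[z] = 0.
Proof.
move=> hdet hadj; apply/eqP; apply: contraT => nz.
have jacobi := congr1 (map_mx (horner_eval z)) (congr1 (map_mx deriv) (mul_mx_adj M)).
rewrite deriv_mulmx map_mxD !map_mxM map_mx_adj hadj mulmx0 add0r in jacobi.
have : map_mx (horner_eval z) M *m (((\det M)^`().[z])^-1 *: map_mx (horner_eval z) (map_mx deriv (\adj M))) = 1%:M.
  rewrite -scalemxAr jacobi.
  apply/matrixP => a b; rewrite !mxE derivMn horner_evalE hornerMn.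
  by rewrite mulrnAr mulVf.
case/mulmx1_unit => hu _; move: hu; rewrite unitmxE unitfE hdet.
by rewrite eqxx.
Qed.

End Jacobi.

(* T(x; lam + h) as a matrix of polynomials in the increment h. *)
Definition Tev_shift n (Cf : nat -> Pt -> 'M[complex]_n) N x lam : 'M[{poly complex}]_n :=
  \sum_(j < N.+1) ('X + lam%:P) ^+ j *: map_mx polyC (Cf j x).

Lemma Tev_shiftE n (Cf : nat -> Pt -> 'M[complex]_n) N x lam h :
  map_mx (horner_eval h) (Tev_shift Cf N x lam) = Tev Cf N x (lam + h).
Proof.
apply/matrixP => a b; rewrite /Tev_shift /Tev !mxE !summxE horner_evalE horner_sum.
apply: eq_bigr => j _; rewrite !mxE hornerM hornerC.
by rewrite horner_exp hornerD hornerX hornerC addrC.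
Qed.

(* Jacobi's formula: if lam is a simple zero of det T(x; .), then
   adj T(x; lam) <> 0, otherwise the derivative of det T would vanish. *)
Lemma simple_zero_adj_neq0 n (Cf : nat -> Pt -> 'M[complex]_n) N x lam :
  simple_zero (fun l => \det (Tev Cf N x l)) lam -> \adj (Tev Cf N x lam) != 0.
Proof.
case=> hz [l [lnz hl]]; set M := Tev_shift Cf N x lam.
have hev : forall h, (\det M).[h] = \det (Tev Cf N x (lam + h)).
  by move=> h; rewrite -Tev_shiftE det_map_mx.
have hM0 : map_mx (horner_eval 0) M = Tev Cf N x lam by rewrite Tev_shiftE addr0.
apply: contra lnz => /eqP hadj.
have -> : l = (\det M)^`().[0].
  apply: cderiv_poly0 => eps ep; case: (hl eps ep) => d [dp hd].
  by exists d; split => // h hnz hh; rewrite !hev add0r addr0; exact: hd.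
by rewrite (deriv_det_singular (z := 0)) ?hM0.
Qed.

Section Intervals.
Local Open Scope R_scope.

Lemma Rabs_lt_iff s t d : Rabs (s - t) < d <-> t - d < s /\ s < t + d.
Proof. by split; [move=> h; split; move: h; split_Rabs; lra | case=> h1 h2; split_Rabs; lra]. Qed.

Lemma open_interval_nbhd c e t : c < t -> t < e ->
  exists d, 0 < d /\ forall s, Rabs (s - t) < d -> c < s /\ s < e.
Proof.
move=> ct te; exists (Rmin (t - c) (e - t)); split; first by apply: Rmin_pos; lra.
move=> s /Rabs_lt_iff [h1 h2].
by have := Rmin_l (t - c) (e - t); have := Rmin_r (t - c) (e - t); lra.
Qed.

End Intervals.

Lemma parallel_deriv_direction n (w wd : R -> 'cV[complex]_n) (i : 'I_n) c e :
  (forall t, Rlt c t -> Rlt t e ->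
     [/\ w t i 0 != 0, forall m, is_derivR (fun s => w s m 0) t (wd t m 0)
       & exists a, wd t = a *: w t]) ->
  forall s t, Rlt c s -> Rlt s e -> Rlt c t -> Rlt t e -> w s = (w s i 0 / w t i 0) *: w t.
Proof.
move=> h s t cs se ct te.
pose al t := wd t i 0 / w t i 0.
have hal : forall t, Rlt c t -> Rlt t e -> forall m, wd t m 0 = al t * w t m 0.
  by move=> t' c' e' m; rewrite /al; case: (h t' c' e') => nz _ [a ->]; rewrite !mxE mulfK.
have ratio : forall m, w s m 0 / w s i 0 = w t m 0 / w t i 0.
  move=> m; apply: (ratio_const (wi := fun t => w t i 0) (wm := fun t => w t m 0) (al := al) (c := c) (e := e)) => // t' c' e'.
  by case: (h t' c' e') => nz hd _; split; rewrite // -hal.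
have nzs : w s i 0 != 0 by case: (h s cs se).
apply/matrixP => m z; rewrite (ord1 z) mxE.
by rewrite mulrAC -mulrA -ratio mulrCA mulfV // mulr1.
Qed.

Section KernelAlongSegment.
Variables (n : nat) (A A' : R -> 'M[complex]_n) (c e : R).
Hypothesis A_deriv : forall t, Rlt c t -> Rlt t e ->
  forall i j, is_derivR (fun s => A s i j) t (A' t i j).
Hypothesis A'_ker : forall t, Rlt c t -> Rlt t e ->
  forall v : 'cV[complex]_n, A t *m v = 0 -> A' t *m v = 0.
Hypothesis A_ker_le1 : forall t, Rlt c t -> Rlt t e -> ker_le1 (A t).

(* Differentiating A w = 0 gives A w' = - A' w = 0. *)
Lemma kernel_vector_deriv (w : R -> 'cV[complex]_n) (wd : 'cV[complex]_n) t :
  Rlt c t -> Rlt t e -> (forall s, Rlt c s -> Rlt s e -> A s *m w s = 0) ->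
  (forall m, is_derivR (fun s => w s m 0) t (wd m 0)) -> A t *m wd = 0.
Proof.
move=> ct te hAw hw.
have product : A' t *m w t + A t *m wd = 0.
  apply/matrixP => m z; rewrite (ord1 z) [RHS]mxE.
  have hp : is_derivR (fun s => (A s *m w s) m 0) t ((A' t *m w t + A t *m wd) m 0).
    rewrite !mxE -big_split /=.
    apply: is_derivR_ext (is_derivR_sum _ (fun k _ => is_derivR_mul (A_deriv ct te m k) (hw k))) _.
    by move=> s; rewrite mxE.
  apply: is_derivR_unique hp _.
  case: (open_interval_nbhd ct te) => d [dp hd].
  apply: (is_derivR_local dp _ (is_derivR_const 0 t)) => s /hd [cs se].
  by rewrite hAw // mxE.
by move/eqP: product; rewrite addr_eq0 (A'_ker ct te (hAw t ct te)) eq_sym oppr_eq0 => /eqP.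
Qed.

(* Near a point where the kernel vector field w does not vanish, w' stays
   parallel to w, so w keeps its direction and the kernel of A is constant. *)
Lemma kernel_locally_const (w : R -> 'cV[complex]_n) t0 :
  Rlt c t0 -> Rlt t0 e ->
  (forall t, Rlt c t -> Rlt t e -> A t *m w t = 0) ->
  (forall t, Rlt c t -> Rlt t e -> forall m, derivableR (fun s => w s m 0) t) ->
  w t0 != 0 ->
  exists d, Rlt 0 d /\ forall s, Rlt (Rabs (Rminus s t0)) d ->
    forall p : 'cV[complex]_n, A s *m p = 0 <-> A t0 *m p = 0.
Proof.
move=> ct0 t0e hAw hw nz.
case: (nonzero_entry nz) => i [z]; rewrite (ord1 z) => nzi.
case: (derivableR_nonzero_near (hw t0 ct0 t0e i) nzi) => d1 [d1p hd1].
case: (open_interval_nbhd ct0 t0e) => d2 [d2p hd2].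
pose d := Rmin d1 d2.
have dp : Rlt 0 d by apply: Rmin_pos.
have inside : forall s, Rlt (Rabs (Rminus s t0)) d -> [/\ Rlt c s, Rlt s e & w s i 0 != 0].
  move=> s hs; have [cs se] := hd2 s (Rlt_le_trans _ _ _ hs (Rmin_r _ _)).
  by split => //; apply: hd1; apply: Rlt_le_trans hs (Rmin_l _ _).
pose wd t := \col_m derivR_of (fun s => w s m 0) t.
have direction : forall s, Rlt (Rabs (Rminus s t0)) d -> w s = (w s i 0 / w t0 i 0) *: w t0.
  move=> s /Rabs_lt_iff [s1 s2].
  have [t01 t02] : Rlt (Rminus t0 d) t0 /\ Rlt t0 (Rplus t0 d).
    by apply/Rabs_lt_iff; rewrite Rminus_diag Rabs_R0.
  apply: (parallel_deriv_direction (wd := wd) _ s1 s2 t01 t02) => t t1 t2.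
  case: (inside t (proj2 (Rabs_lt_iff _ _ _) (conj t1 t2))) => ct te nzt.
  have hwd : forall m, is_derivR (fun s => w s m 0) t (wd t m 0).
    by move=> m; rewrite mxE; apply: derivR_ofP; apply: hw.
  split => //; apply: (A_ker_le1 ct te) (hAw t ct te) _.
    exact: kernel_vector_deriv hAw hwd.
  by apply: contra nzt => /eqP ->; rewrite mxE.
exists d; split => // s hs p; case: (inside s hs) => cs se nzs.
apply: (ker_le1_same_line (A_ker_le1 cs se) (A_ker_le1 ct0 t0e) (hAw s cs se) (hAw t0 ct0 t0e) nz (direction s hs)).
by rewrite mulf_neq0 // invr_neq0.
Qed.

End KernelAlongSegment.

Section IntervalConnected.
Local Open Scope R_scope.

Lemma locally_const_continuous (g : R -> R) u :
  (exists d, 0 < d /\ forall y, Rabs (y - u) < d -> g y = g u) -> continuity_pt g u.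
Proof.
case=> d [dp hd] eps ep; exists d; split => // y [_ hy].
by rewrite /dist /= /R_dist hd // Rminus_diag Rabs_R0.
Qed.

(* By the intermediate value theorem, a continuous function with values in
   {0, 1} is constant. *)
Lemma continuous_two_valued_const (g : R -> R) :
  continuity g -> (forall y, g y = 0 \/ g y = 1) -> forall s t, s < t -> g s = g t.
Proof.
move=> gc g01 s t st.
have no_half : forall f, continuity f -> (forall y, f y = g y - / 2 \/ f y = / 2 - g y) ->
    f s < 0 -> 0 < f t -> False.
  move=> f fc hf fs ft; case: (IVT f s t fc st fs ft) => z [_ hz].
  by move: hz; case: (hf z) => ->; case: (g01 z) => ->; lra.
case: (g01 s) => hs; case: (g01 t) => ht; rewrite hs ht //; exfalso.
- apply: (no_half (fun y => g y - / 2)); try (move=> *; left); try lra.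
  by apply: continuity_minus gc (continuity_const _ _).
- apply: (no_half (fun y => / 2 - g y)); try (move=> *; right); try lra.
  by apply: continuity_minus (continuity_const _ _) gc.
Qed.

Definition clamp s t y := Rmax s (Rmin y t).

Lemma clamp_lip s t y u : s <= t -> Rabs (clamp s t y - clamp s t u) <= Rabs (y - u).
Proof.
rewrite /clamp /Rmax /Rmin => st.
by case: (Rle_dec y t); case: (Rle_dec u t); case: (Rle_dec s y); case: (Rle_dec s u);
  case: (Rle_dec s t); rewrite /Rabs => *; repeat case: Rcase_abs; lra.
Qed.

Lemma clamp_in s t y : s <= t -> s <= clamp s t y <= t.
Proof.
by rewrite /clamp /Rmax /Rmin => st; case: (Rle_dec y t); case: (Rle_dec s y);
  case: (Rle_dec s t); lra.
Qed.

Lemma clamp_id s t y : s <= y <= t -> clamp s t y = y.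
Proof.
by rewrite /clamp /Rmax /Rmin => hy; case: (Rle_dec y t); case: (Rle_dec s y); lra.
Qed.

Lemma interval_const (Q : R -> Prop) c e :
  (forall t, c < t -> t < e -> exists d, 0 < d /\ forall s, Rabs (s - t) < d -> (Q s <-> Q t)) ->
  forall s t, c < s -> s < e -> c < t -> t < e -> (Q s <-> Q t).
Proof.
move=> hloc.
suff ordered : forall s t, c < s -> s < e -> c < t -> t < e -> s < t -> (Q s <-> Q t).
  move=> s t cs se ct te; case: (Rtotal_order s t) => [st|[->|ts]]; first exact: ordered.
    by [].
  by symmetry; apply: ordered.
move=> s t cs se ct te st.
pose g y := if excluded_middle_informative (Q (clamp s t y)) then 0 else 1.
have gloc : forall u, exists d, 0 < d /\ forall y, Rabs (y - u) < d -> g y = g u.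
  move=> u; have [h1 h2] := clamp_in u (Rlt_le _ _ st).
  case: (hloc (clamp s t u) ltac:(lra) ltac:(lra)) => d [dp hd].
  exists d; split => // y hy.
  have hq := hd (clamp s t y) (Rle_lt_trans _ _ _ (clamp_lip y u (Rlt_le _ _ st)) hy).
  by rewrite /g; do 2 case: excluded_middle_informative => ? //; exfalso; tauto.
have gst : g s = g t.
  apply: (continuous_two_valued_const _ _ st).
    by move=> u; apply: locally_const_continuous.
  by move=> y; rewrite /g; case: excluded_middle_informative; [left|right].
have [cls clt] : clamp s t s = s /\ clamp s t t = t by split; apply: clamp_id; lra.
move: gst; rewrite /g cls clt.
by do 2 case: excluded_middle_informative => ?; move=> /= hg; try lra; tauto.
Qed.

End IntervalConnected.

Lemma kernel_const_on_segment n (I : Type) (A A' : R -> 'M[complex]_n)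
    (W : I -> R -> 'cV[complex]_n) c e :
  (forall t, Rlt c t -> Rlt t e -> forall i j, is_derivR (fun s => A s i j) t (A' t i j)) ->
  (forall t, Rlt c t -> Rlt t e -> forall v : 'cV[complex]_n, A t *m v = 0 -> A' t *m v = 0) ->
  (forall t, Rlt c t -> Rlt t e -> ker_le1 (A t)) ->
  (forall i t, Rlt c t -> Rlt t e -> A t *m W i t = 0) ->
  (forall i t, Rlt c t -> Rlt t e -> forall m, derivableR (fun s => W i s m 0) t) ->
  (forall t, Rlt c t -> Rlt t e -> exists i, W i t != 0) ->
  forall s t, Rlt c s -> Rlt s e -> Rlt c t -> Rlt t e ->
  forall p : 'cV[complex]_n, A s *m p = 0 <-> A t *m p = 0.
Proof.
move=> A_deriv A'_ker A_ker_le1 W_ker W_deriv W_nonzero s t cs se ct te p.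
apply: (interval_const (Q := fun t => A t *m p = 0) (c := c) (e := e)) => // t0 c0 e0.
case: (W_nonzero t0 c0 e0) => i nz.
case: (kernel_locally_const A_deriv A'_ker A_ker_le1 c0 e0 (W_ker i) (W_deriv i) nz) => d [dp hd].
by exists d; split => // s' hs'; apply: hd.
Qed.

Section Balls.
Local Open Scope R_scope.

Lemma ball_coord x r y : ball2 x r y -> Rabs (fst y - fst x) < r /\ Rabs (snd y - snd x) < r.
Proof.
have sqrt_ge : forall a b, Rabs a <= sqrt (a ^ 2 + b ^ 2).
  by move=> a b; rewrite -(sqrt_Rsqr_abs a); apply: sqrt_le_1_alt; rewrite /Rsqr /=; nra.
rewrite /ball2 => h; split; apply: Rle_lt_trans h; last rewrite Rplus_comm; exact: sqrt_ge.
Qed.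

Lemma ball_of_coord x r y : Rabs (fst y - fst x) < r / 2 -> Rabs (snd y - snd x) < r / 2 ->
  ball2 x r y.
Proof.
rewrite /ball2; move: (fst y - fst x) (snd y - snd x) => a b ha hb.
apply: Rle_lt_trans (_ : sqrt (a ^ 2 + b ^ 2) <= Rabs a + Rabs b) _; last lra.
apply: Rsqr_incr_0_var; last by have := Rabs_pos a; have := Rabs_pos b; lra.
rewrite Rsqr_sqrt; last by apply: Rplus_le_le_0_compat; apply: pow2_ge_0.
rewrite -(pow2_abs a) -(pow2_abs b) /Rsqr /=.
by have := Rabs_pos a; have := Rabs_pos b; nra.
Qed.

End Balls.

Definition pderivable (k : xdir) (f : Pt -> complex) (x : Pt) : Prop :=
  exists d, is_pderivC k f x d.

Lemma pderiv_line k (f : Pt -> complex) x t d :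
  is_pderivC k f (shift k x t) d -> is_derivR (fun s => f (shift k x s)) t d.
Proof. by case: k. Qed.

Lemma pderiv_mxE n k (F : Pt -> 'M[complex]_n) x D : is_pderiv_mx k F x D -> pderiv_mx k F x = D.
Proof.
move=> hD; apply/matrixP => i j; rewrite mxE /pderivC.
case: excluded_middle_informative => [e|]; last by case; exists (D i j).
exact: is_derivR_unique (proj2_sig (constructive_indefinite_description _ e)) (hD i j).
Qed.

Lemma pderivable_const k c x : pderivable k (fun _ => c) x.
Proof. by exists 0; exact: is_derivR_const. Qed.

Lemma pderivable_add k f g x : pderivable k f x -> pderivable k g x ->
  pderivable k (fun y => f y + g y) x.
Proof. by case=> a ha [b hb]; exists (a + b); exact: is_derivR_add. Qed.

Lemma pderivable_mul k f g x : pderivable k f x -> pderivable k g x ->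
  pderivable k (fun y => f y * g y) x.
Proof. by case=> a ha [b hb]; eexists; exact: is_derivR_mul ha hb. Qed.

Lemma pderivable_ext k f g x : pderivable k f x -> f =1 g -> pderivable k g x.
Proof. exact: (Pr_ext (Pr := fun f => pderivable k f x)). Qed.

Section PderivableClosure.
Variables (k : xdir) (x : Pt).

Lemma pderivable_sum (J : Type) (r : seq J) (P : pred J) (F : J -> Pt -> complex) :
  (forall j, P j -> pderivable k (F j) x) ->
  pderivable k (fun y => \sum_(j <- r | P j) F j y) x.
Proof.
exact: (Pr_big (Pr := fun f => pderivable k f x) (pderivable_const k ^~ x)
  (fun f g => @pderivable_add k f g x)).
Qed.

Lemma pderivable_adj n (M : Pt -> 'M[complex]_n) :
  (forall a b, pderivable k (fun y => M y a b) x) ->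
  forall i j, pderivable k (fun y => \adj (M y) i j) x.
Proof.
exact: (Pr_adj (Pr := fun f => pderivable k f x) (pderivable_const k ^~ x)
  (fun f g => @pderivable_add k f g x) (fun f g => @pderivable_mul k f g x)).
Qed.

Lemma pderivable_mulmx m n p (M1 : Pt -> 'M[complex]_(m, n)) (M2 : Pt -> 'M[complex]_(n, p)) :
  (forall a b, pderivable k (fun y => M1 y a b) x) ->
  (forall a b, pderivable k (fun y => M2 y a b) x) ->
  forall i j, pderivable k (fun y => (M1 y *m M2 y) i j) x.
Proof.
exact: (Pr_mulmx (Pr := fun f => pderivable k f x) (pderivable_const k ^~ x)
  (fun f g => @pderivable_add k f g x) (fun f g => @pderivable_mul k f g x)).
Qed.

Lemma pderivable_Tev n (Cf : nat -> Pt -> 'M[complex]_n) N lam :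
  (forall j, (j <= N)%N -> forall a b, pderivable k (fun y => Cf j y a b) x) ->
  forall a b, pderivable k (fun y => Tev Cf N y lam a b) x.
Proof.
move=> hC a b; apply: (@pderivable_ext _ (fun y => \sum_(j < N.+1) lam ^+ j * Cf j y a b)).
  apply: pderivable_sum => j _; apply: pderivable_mul (pderivable_const _ _ _) _.
  exact: hC (ltn_ord j) a b.
by move=> y; rewrite /Tev summxE; apply: eq_bigr => j _; rewrite mxE.
Qed.

Lemma pderivable_adj_col n (M1 M2 : Pt -> 'M[complex]_n) :
  (forall a b, pderivable k (fun y => M1 y a b) x) ->
  (forall a b, pderivable k (fun y => M2 y a b) x) ->
  forall j a, pderivable k (fun y => col j (\adj (M1 y) *m \adj (M2 y)) a 0) x.
Proof.
move=> h1 h2 j a.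
apply: pderivable_ext (pderivable_mulmx (pderivable_adj h1) (pderivable_adj h2) a j) _.
by move=> y; rewrite [RHS]mxE.
Qed.

End PderivableClosure.

Section PlanarKernel.
Variables (n : nat) (Omega : Pt -> Prop) (A : Pt -> 'M[complex]_n)
  (U : xdir -> Pt -> 'M[complex]_n) (I : Type) (W : I -> Pt -> 'cV[complex]_n).
Hypothesis Omega_open : open_set Omega.
Hypothesis A_ker_le1 : forall x, Omega x -> ker_le1 (A x).
Hypothesis A_pderiv : forall k x, Omega x -> is_pderiv_mx k A x (U k x *m A x).
Hypothesis W_ker : forall i x, Omega x -> A x *m W i x = 0.
Hypothesis W_pderivable : forall i k x m, Omega x -> pderivable k (fun y => W i y m 0) x.
Hypothesis W_nonzero : forall x, Omega x -> exists i, W i x != 0.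

Lemma kernel_const_on_line k x c e : (forall t, Rlt c t -> Rlt t e -> Omega (shift k x t)) ->
  forall s t, Rlt c s -> Rlt s e -> Rlt c t -> Rlt t e ->
  forall p : 'cV[complex]_n, A (shift k x s) *m p = 0 <-> A (shift k x t) *m p = 0.
Proof.
move=> inside.
apply: (kernel_const_on_segment (A' := fun t => U k (shift k x t) *m A (shift k x t))
          (W := fun i t => W i (shift k x t))).
- by move=> t ct te i j; apply: (pderiv_line (f := fun y => A y i j)); apply: A_pderiv; apply: inside.
- by move=> t _ _ v hv; rewrite -mulmxA hv mulmx0.
- by move=> t ct te; apply: A_ker_le1; apply: inside.
- by move=> i t ct te; apply: W_ker; apply: inside.
- move=> i t ct te m; case: (@W_pderivable i k _ m (inside t ct te)) => d hd.
  by exists d; exact: (pderiv_line (f := fun y => W i y m 0)).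
- by move=> t ct te; apply: W_nonzero; apply: inside.
Qed.

(* Moving horizontally and then vertically inside a ball contained in Omega. *)
Lemma kernel_locally_const_ball x : Omega x -> exists rho, Rlt 0 rho /\
  forall y, ball2 x rho y -> Omega y /\ forall p : 'cV[complex]_n, A y *m p = 0 <-> A x *m p = 0.
Proof.
case: x => a1 a2 hx; case: (Omega_open hx) => r [rp hball].
have square : forall y, Rlt (Rabs (Rminus (fst y) a1)) (Rdiv r 2) ->
    Rlt (Rabs (Rminus (snd y) a2)) (Rdiv r 2) -> Omega y.
  by move=> y h1 h2; apply: hball; apply: ball_of_coord.
exists (Rdiv r 2); split; first lra.
case=> y1 y2 /ball_coord [/= hy1 hy2]; split; first exact: square.
move=> p.
have horizontal := kernel_const_on_line (k := X1) (x := (a1, a2)) (c := Rminus a1 (Rdiv r 2))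
  (e := Rplus a1 (Rdiv r 2)).
have vertical := kernel_const_on_line (k := X2) (x := (y1, a2)) (c := Rminus a2 (Rdiv r 2))
  (e := Rplus a2 (Rdiv r 2)).
move: hy1 hy2 => /Rabs_lt_iff [hy1 hy1'] /Rabs_lt_iff [hy2 hy2'].
rewrite /= in horizontal vertical.
rewrite (vertical _ y2 a2) ?(horizontal _ y1 a1) //; try lra.
- move=> t t1 t2; apply: square => /=; last by rewrite Rminus_diag Rabs_R0; lra.
  by apply/Rabs_lt_iff.
- move=> t t1 t2; apply: square => /=; last by apply/Rabs_lt_iff.
  by apply/Rabs_lt_iff.
Qed.

Theorem kernel_const : connected Omega ->
  exists p : 'cV[complex]_n, p != 0 /\ forall x, Omega x -> A x *m p = 0.
Proof.
case=> [[x0 hx0] Omega_connected].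
case: (W_nonzero hx0) => i0 pnz; exists (W i0 x0); split => //.
pose in_ker y := A y *m W i0 x0 = 0.
have := Omega_connected (fun y => Omega y /\ in_ker y) (fun y => Omega y /\ ~ in_ker y).
case.
- move=> y [hy hker]; case: (kernel_locally_const_ball hy) => rho [rp hr].
  by exists rho; split => // z /hr [hz hiff]; split => //; apply/hiff.
- move=> y [hy hker]; case: (kernel_locally_const_ball hy) => rho [rp hr].
  by exists rho; split => // z /hr [hz hiff]; split => // /hiff.
- by move=> y hy; case: (classic (in_ker y)); [left | right].
- by move=> y _ [_ h1] [_ h2].
- by move=> h x hx; case: (h x hx).
- by move=> h; case: (h x0 hx0) => _ []; exact: W_ker.
Qed.

End PlanarKernel.

(* The theorem: kernel_const applied to A = T P at lam_i, with the columns of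
   adj P adj B as kernel vector fields; then A_{,k} p = U_k A p = 0. *)
Theorem mainTheorem2 (n N : nat) (Omega : Pt -> Prop)
    (Phi : Pt -> complex -> 'M[complex]_n) (Cf : nat -> Pt -> 'M[complex]_n)
    (lam_i : complex) (r : R) (U : xdir -> Pt -> complex -> 'M[complex]_n) :
  open_set Omega -> connected Omega -> Rlt 0 r ->
  (* Phi: smooth in x, holomorphic in lambda near lam_i, invertible *)
  (forall lam : complex, Rlt (Cnorm (lam - lam_i)) r -> smooth_mx Omega (fun x => Phi x lam)) ->
  (forall x (lam : complex), Omega x -> Rlt (Cnorm (lam - lam_i)) r ->
     holo_mx (Phi x) lam /\ Phi x lam \in unitmx) ->
  (forall x, Omega x -> Phi x lam_i \in unitmx) ->
  (* T = sum_{j<=N} C_j lambda^j with smooth coefficients *)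
  (forall j, (j <= N)%N -> smooth_mx Omega (Cf j)) ->
  (* lam_i is a simple zero of det T(x; .) *)
  (forall x, Omega x -> simple_zero (fun lam => \det (Tev Cf N x lam)) lam_i) ->
  (* Phi~_{,k} = U~_k Phi~ with U~_k holomorphic in lambda near lam_i *)
  (forall k x (lam : complex), Omega x -> Rlt (Cnorm (lam - lam_i)) r ->
     holo_mx (U k x) lam /\
     is_pderiv_mx k (fun y => tPhi Cf N Phi y lam) x
                  (U k x lam *m tPhi Cf N Phi x lam)) ->
  exists p : 'cV[complex]_n, p != 0 /\
    forall x, Omega x ->
      tPhi Cf N Phi x lam_i *m p = 0 /\
      forall k, pderiv_mx k (fun y => tPhi Cf N Phi y lam_i) x *m p = 0.
Proof.
move=> Omega_open Omega_conn r_pos Phi_smooth _ Phi_unit Cf_smooth T_simple U_eq.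
have lam_i_near : Rlt (Cnorm (lam_i - lam_i)) r.
  by have -> : Cnorm (lam_i - lam_i) = R0 by rewrite subrr; exact: Cnorm_C0.
pose B x := Tev Cf N x lam_i; pose P x := Phi x lam_i.
pose W j x := col j (\adj (P x) *m \adj (B x)).
have adjB_neq0 : forall x, Omega x -> \adj (B x) != 0.
  by move=> x hx; apply: simple_zero_adj_neq0; exact: T_simple.
have W_pderivable : forall j k x a, Omega x -> pderivable k (fun y => W j y a 0) x.
  move=> j k x a hx; apply: pderivable_adj_col => a' b'.
    exact: ((Phi_smooth lam_i lam_i_near a' b' [::] x hx).2 k).
  by apply: pderivable_Tev => i hi a'' b''; exact: ((Cf_smooth i hi a'' b'' [::] x hx).2 k).
suff [p [p_neq0 p_ker]] : exists p : 'cV[complex]_n,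
    p != 0 /\ forall x, Omega x -> tPhi Cf N Phi x lam_i *m p = 0.
  exists p; split => // x hx; split; first exact: p_ker.
  by move=> k; rewrite (pderiv_mxE (U_eq k x lam_i hx lam_i_near).2) -mulmxA p_ker ?mulmx0.
apply: (kernel_const (A := fun x => tPhi Cf N Phi x lam_i) (U := fun k x => U k x lam_i)
  (W := W) Omega_open _ _ _ W_pderivable _ Omega_conn).
- move=> x hx; apply: ker_le1_mulmx_unit (Phi_unit x hx).
  by apply: ker_le1_of_adj; exact: adjB_neq0.
- by move=> k x hx; exact: (U_eq k x lam_i hx lam_i_near).2.
- by move=> j x hx; apply: singular_adj_ker; case: (T_simple x hx).
- move=> x hx; apply: nonzero_col; apply: mulmx_unit_neq0 (adj_unitmx (Phi_unit x hx)) _.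
  exact: adjB_neq0.
Qed.
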